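(* Let $\mathcal{S}$ be a finite subset of $\overline{\mathbb{M}}$. Then there is an integer $e_0$ such that $\Delta^{(m)}_e(\mathcal{S})\subseteq\Delta^{(m)}_e(\phi(\mathcal{S}))$ for all $e\ge e_0$.
   Context: $q$ is a prime power, $m$ a positive integer. A monomial $\mu\neq1$ in $x_0,\dots,x_m$ written $x_0^{a_0}\cdots x_k^{a_k}$ with $a_k>0$ is projectively reduced if $a_0,\dots,a_{k-1}\le q-1$; $1$ is projectively reduced. $\overline{\mathbb{M}}$ is the set of projectively reduced monomials, $\overline{\mathbb{M}}_e$ those of degree $e$, and $\overline{\mathbb{M}}^{(m)}_e=\{x_0^{a_0}\cdots x_m^{a_m}\in\overline{\mathbb{M}}_e:a_m>0\}$. For a set $\mathcal{S}$ of monomials, $\Delta_e(\mathcal{S})=\{\mu\in\overline{\mathbb{M}}_e:\text{no }\nu\in\mathcal{S}\text{ divides }\mu\}$ and $\Delta^{(m)}_e(\mathcal{S})=\Delta_e(\mathcal{S})\cap\overline{\mathbb{M}}^{(m)}_e$. Given $\mathcal{S}\subseteq\overline{\mathbb{M}}$, for $\mu=x_0^{i_0}\cdots x_m^{i_m}\in\mathcal{S}$ set $\phi(\mu)=\mu x_{m-1}/x_m$ if $x_0^{i_0}\cdots x_{m-2}^{i_{m-2}}x_{m-1}^{i_{m-1}+i_m}\notin\mathcal{S}$ and $i_{m-1}+1<q$, and $\phi(\mu)=\mu$ otherwise; $\phi(\mathcal{S})$ is the image. *)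

From mathcomp Require Import all_boot.
Set Implicit Arguments. Unset Strict Implicit. Unset Printing Implicit Defensive.

(* A monomial x_0^{a_0} ... x_m^{a_m} in the m+1 variables x_0,...,x_m,
   represented by its exponent vector. *)
Definition mon (m : nat) := {ffun 'I_m.+1 -> nat}.

Definition prime_power (q : nat) : Prop :=
  exists p k, prime p /\ 0 < k /\ q = p ^ k.

Definition mon1 (m : nat) (mu : mon m) : Prop := forall i, mu i = 0.

Definition proj_reduced (q m : nat) (mu : mon m) : Prop :=
  mon1 mu \/
  exists k : 'I_m.+1, [/\ 0 < mu k,
      (forall j : 'I_m.+1, k < j -> mu j = 0) &
      (forall i : 'I_m.+1, i < k -> mu i <= q - 1)].

Definition mdeg (m : nat) (mu : mon m) : nat := \sum_(i < m.+1) mu i.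

Definition mdvd (m : nat) (nu mu : mon m) : Prop := forall i, nu i <= mu i.

Definition Delta (q m e : nat) (S : seq (mon m)) (mu : mon m) : Prop :=
  [/\ proj_reduced q mu, mdeg mu = e & forall nu, nu \in S -> ~ mdvd nu mu].

Definition Delta_m (q m e : nat) (S : seq (mon m)) (mu : mon m) : Prop :=
  Delta q e S mu /\ 0 < mu ord_max.

(* index m-1 (meaningful for m >= 1) *)
Definition idx_pred (m : nat) : 'I_m.+1 := inord m.-1.

Definition collapse (m : nat) (mu : mon m) : mon m :=
  [ffun i : 'I_m.+1 => if i == ord_max then 0
                       else if i == idx_pred m then mu (idx_pred m) + mu ord_max
                       else mu i].

(* mu * x_{m-1} / x_m  (only used when the exponent of x_m is positive) *)
Definition shift (m : nat) (mu : mon m) : mon m :=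
  [ffun i : 'I_m.+1 => if i == ord_max then (mu ord_max).-1
                       else if i == idx_pred m then (mu (idx_pred m)).+1
                       else mu i].

Definition phi1 (q m : nat) (S : seq (mon m)) (mu : mon m) : mon m :=
  if (collapse mu \notin S) && ((mu (idx_pred m)).+1 < q) then shift mu else mu.

Definition phi (q m : nat) (S : seq (mon m)) : seq (mon m) :=
  map (phi1 q S) S.

From mathcomp Require Import all_boot.

Set Implicit Arguments.
Unset Strict Implicit.
Unset Printing Implicit Defensive.

(* A projectively reduced monomial containing x_m has all earlier exponents
   below q, so its degree exceeds its x_m-exponent by at most m(q-1).  In large
   degree the x_m-exponent of mu therefore exceeds that of every nu in S; as
   phi only moves one x_m of nu to x_{m-1}, phi(nu) | mu then forces nu | mu. *)

Lemma proj_reduced_exponent_le (q m : nat) (mu : mon m) (i : 'I_m.+1) :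
  proj_reduced q mu -> 0 < mu ord_max -> i != ord_max -> mu i <= q - 1.
Proof.
move=> [mu1 | [k [_ mu_after_k mu_before_k]]] mu_m_gt0 i_ne_max.
  by rewrite mu1 in mu_m_gt0.
have k_max : k = ord_max.
  apply/val_inj/eqP; rewrite eqn_leq -ltnS ltn_ord leqNgt /=.
  by apply/negP => /(mu_after_k ord_max) mu_m0; rewrite mu_m0 in mu_m_gt0.
by apply: mu_before_k; rewrite k_max /= ltn_neqAle -ltnS ltn_ord andbT.
Qed.

Lemma proj_reduced_mdeg_le (q m : nat) (mu : mon m) :
  proj_reduced q mu -> 0 < mu ord_max -> mdeg mu <= m * (q - 1) + mu ord_max.
Proof.
move=> mu_red mu_m_gt0; rewrite /mdeg big_ord_recr /= leq_add2r.
rewrite -[m in m * _]card_ord -sum_nat_const; apply: leq_sum => i _.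
by apply: proj_reduced_exponent_le => //; rewrite -val_eqE /= ltn_eqF.
Qed.

Lemma shift_ge (m : nat) (nu : mon m) (i : 'I_m.+1) :
  i != ord_max -> nu i <= shift nu i.
Proof.
by move=> /negbTE i_ne_max; rewrite ffunE i_ne_max; case: ifP => // /eqP ->.
Qed.

Lemma phi1_mdvd (q m : nat) (S : seq (mon m)) (nu mu : mon m) :
  nu ord_max <= mu ord_max -> mdvd (phi1 q S nu) mu -> mdvd nu mu.
Proof.
rewrite /phi1; case: ifP => // _ nu_m_le shift_dvd i.
have [-> // | i_ne_max] := eqVneq i ord_max.
exact: leq_trans (shift_ge nu i_ne_max) (shift_dvd i).
Qed.

Lemma Delta_m_map (q m e : nat) (f : mon m -> mon m) (S : seq (mon m)) (mu : mon m) :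
  (forall nu, nu \in S -> mdvd (f nu) mu -> mdvd nu mu) ->
  Delta_m q e S mu -> Delta_m q e (map f S) mu.
Proof.
move=> f_dvd [[mu_red mu_deg S_ndvd] mu_m_gt0]; split=> //; split=> //.
by move=> _ /mapP [nu nu_in ->] /(f_dvd _ nu_in); apply: S_ndvd.
Qed.

Theorem lemma4p6 (q m : nat) (hq : prime_power q) (hm : 0 < m)
  (S : seq (mon m)) (hS : forall mu, mu \in S -> proj_reduced q mu) :
  exists e0 : nat, forall e : nat, e0 <= e ->
    forall mu : mon m, Delta_m q e S mu -> Delta_m q e (phi q S) mu.
Proof.
exists (m * (q - 1) + \max_(nu <- S) nu ord_max).+1 => e e_large mu mu_Delta.
have [[mu_red mu_deg _] mu_m_gt0] := mu_Delta.
apply: Delta_m_map mu_Delta => nu nu_in; apply: phi1_mdvd.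
have deg_le := proj_reduced_mdeg_le mu_red mu_m_gt0; rewrite mu_deg in deg_le.
have nu_le_max := leq_bigmax_seq (P := xpredT) (F := fun nu : mon m => nu ord_max) nu nu_in isT.
rewrite leqNgt; apply: contraL e_large => lt_mu_nu; rewrite -leqNgt.
by apply: leq_trans deg_le _; rewrite leq_add2l; apply: leq_trans nu_le_max; apply: ltnW.
Qed.
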